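(* Fix $\ell, \tilde\ell \in \mathbb{R}_{>0}$ and $\delta \in \mathbb{R}$. The map $f \mapsto C(f)$ is one-to-one when restricted to the set of barcodes \[ \Big\{ f = x^{\tilde\alpha}y^{\tilde\ell} + \sum_{i=1}^n x^{\alpha_i}y^{\ell} \ :\ n\ge 0,\ \tilde\alpha,\alpha_i\in\mathbb{R},\ \Delta(f) = \delta \Big\}. \]
   Context: A barcode is a finite formal sum $f = \sum_{j} x^{a_j}y^{l_j}$ with $a_j \in \mathbb{R}$, $l_j \in \mathbb{R}_{>0}$ (a finite multiset of bars). Its critical series is $C(f) = \sum_j x^{a_j} - \sum_j x^{a_j+l_j}$ (a finite integer combination of symbols $x^g$, $g\in\mathbb{R}$), and its drift is $\Delta(f) = \sum_j a_j$, the sum of the birth grades of all bars. *)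

From Stdlib Require Import Reals List Permutation ZArith.
Open Scope R_scope.

(* A bar x^a y^l is the pair (a, l). A barcode is a finite multiset of bars,
   represented by a list; two barcodes are equal iff the lists are
   permutations of each other. *)
Definition bar := (R * R)%type.
Definition barcode := list bar.

Definition is_barcode (f : barcode) : Prop :=
  forall b, In b f -> 0 < snd b.

Definition barcode_eq (f g : barcode) : Prop := Permutation f g.

Definition indicator (u g : R) : Z :=
  if Req_EM_T u g then 1%Z else 0%Z.

(* The critical series C(f) = sum_j x^{a_j} - sum_j x^{a_j+l_j}, a finite
   integer combination of symbols x^g, represented by its coefficient
   function g |-> coefficient of x^g. *)
Fixpoint crit (f : barcode) (g : R) : Z :=
  match f with
  | nil => 0%Z
  | (a, l) :: f' => (indicator a g - indicator (a + l) g + crit f' g)%Z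
  end.

Fixpoint drift (f : barcode) : R :=
  match f with
  | nil => 0
  | (a, _) :: f' => a + drift f'
  end.

Definition in_family (l lt delta : R) (f : barcode) : Prop :=
  exists (at_ : R) (alphas : list R),
    barcode_eq f ((at_, lt) :: map (fun a => (a, l)) alphas) /\ drift f = delta.

From Stdlib Require Import Reals List Permutation ZArith Lra Lia Psatz.
Open Scope R_scope.

(* The critical series determines every moment M_h(f) = sum_j h(a_j) - h(a_j + l_j),
   since M_h(f) is the sum of h against the coefficients of C(f).  For
   f = x^t y^lt + sum_i x^(alpha_i) y^l, the moment M_id = -(lt + n l) recovers n,
   and M_(x^2) = -2 lt t - lt^2 - 2 l (Delta(f) - t) - n l^2 then recovers
   t (lt - l); comparing two such barcodes of equal drift gives
   (t1 - t2)(lt - l) = 0.  So either the distinguished bars coincide or every bar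
   has length l, and one is left with barcodes of a single bar length l.  These
   are determined by C: at the smallest birth m, C(f)(m) is the multiplicity of m,
   so a bar (m, l) can be peeled off both sides. *)

Lemma crit_perm (f g : barcode) : Permutation f g -> forall z, crit f z = crit g z.
Proof.
  induction 1 as [| [a b] | [a b] [c d] |]; intro z; simpl;
    [reflexivity | rewrite IHPermutation; reflexivity | lia | congruence].
Qed.

Lemma drift_perm (f g : barcode) : Permutation f g -> drift f = drift g.
Proof.
  induction 1 as [| [a b] | [a b] [c d] |]; simpl;
    [reflexivity | rewrite IHPermutation; reflexivity | lra | congruence].
Qed.

Lemma crit_cons_cancel (b : bar) (f g : barcode) :
  (forall z, crit (b :: f) z = crit (b :: g) z) -> forall z, crit f z = crit g z.
Proof. destruct b; intros H z; specialize (H z); simpl in H; lia. Qed.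

Fixpoint moment (h : R -> R) (f : barcode) : R :=
  match f with
  | nil => 0
  | (a, l) :: f' => h a - h (a + l) + moment h f'
  end.

Fixpoint endpoints (f : barcode) : list R :=
  match f with
  | nil => nil
  | (a, l) :: f' => a :: (a + l) :: endpoints f'
  end.

Fixpoint weighted_sum (U : list R) (c : R -> Z) (h : R -> R) : R :=
  match U with
  | nil => 0
  | u :: U' => IZR (c u) * h u + weighted_sum U' c h
  end.

Lemma weighted_sum_ext (U : list R) (c1 c2 : R -> Z) (h : R -> R) :
  (forall z, c1 z = c2 z) -> weighted_sum U c1 h = weighted_sum U c2 h.
Proof.
  intro H; induction U; simpl; [reflexivity | rewrite H, IHU; reflexivity].
Qed.

Lemma weighted_sum_zero (U : list R) (h : R -> R) :
  weighted_sum U (fun _ => 0%Z) h = 0.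
Proof. induction U; simpl; [reflexivity | rewrite IHU; ring]. Qed.

Lemma weighted_sum_add_sub (U : list R) (c1 c2 c3 : R -> Z) (h : R -> R) :
  weighted_sum U (fun z => (c1 z - c2 z + c3 z)%Z) h
  = weighted_sum U c1 h - weighted_sum U c2 h + weighted_sum U c3 h.
Proof.
  induction U; simpl; [ring |]. rewrite IHU, plus_IZR, minus_IZR. ring.
Qed.

Lemma weighted_sum_indicator_notin (U : list R) (a : R) (h : R -> R) :
  ~ In a U -> weighted_sum U (indicator a) h = 0.
Proof.
  induction U as [| u U IH]; simpl; intro Ha; [reflexivity |].
  unfold indicator at 1; destruct (Req_EM_T a u) as [-> | _]; [tauto |].
  rewrite IH by tauto; ring.
Qed.

Lemma weighted_sum_indicator_in (U : list R) (a : R) (h : R -> R) :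
  NoDup U -> In a U -> weighted_sum U (indicator a) h = h a.
Proof.
  induction U as [| u U IH]; simpl; intros Hnd Ha; [contradiction |].
  inversion Hnd as [| ? ? Hu HU]; subst.
  unfold indicator at 1; destruct (Req_EM_T a u) as [-> | Hne].
  - rewrite weighted_sum_indicator_notin by assumption; ring.
  - destruct Ha as [Ha | Ha]; [congruence |]. rewrite IH by assumption; ring.
Qed.

Lemma weighted_sum_crit (U : list R) (h : R -> R) (f : barcode) :
  NoDup U -> incl (endpoints f) U -> weighted_sum U (crit f) h = moment h f.
Proof.
  intro Hnd; induction f as [| [a l] f IH]; simpl; intro Hincl.
  - apply weighted_sum_zero.
  - rewrite weighted_sum_add_sub, !weighted_sum_indicator_in, IH
      by (assumption || (apply Hincl; simpl; tauto) || (eapply incl_cons_inv, incl_cons_inv; eauto)).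
    ring.
Qed.

Lemma moment_eq_of_crit_eq (h : R -> R) (f1 f2 : barcode) :
  (forall z, crit f1 z = crit f2 z) -> moment h f1 = moment h f2.
Proof.
  intro Hcrit.
  set (U := nodup Req_EM_T (endpoints f1 ++ endpoints f2)).
  assert (HU : NoDup U) by apply NoDup_nodup.
  assert (H1 : incl (endpoints f1) U)
    by (intros x Hx; apply nodup_In, in_or_app; auto).
  assert (H2 : incl (endpoints f2) U)
    by (intros x Hx; apply nodup_In, in_or_app; auto).
  rewrite <- (weighted_sum_crit U h f1), <- (weighted_sum_crit U h f2) by assumption.
  apply weighted_sum_ext, Hcrit.
Qed.

Definition uniform (l : R) (A : list R) : barcode := map (fun a => (a, l)) A.

Lemma moment_id_uniform (l : R) (A : list R) :
  moment (fun x => x) (uniform l A) = - INR (length A) * l.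
Proof.
  induction A as [| a A IH]; [simpl; ring |].
  change (length (a :: A)) with (S (length A)); rewrite S_INR; simpl.
  rewrite IH; ring.
Qed.

Lemma moment_sq_uniform (l : R) (A : list R) :
  moment (fun x => x * x) (uniform l A)
  = -2 * l * drift (uniform l A) - INR (length A) * l * l.
Proof.
  induction A as [| a A IH]; [simpl; ring |].
  change (length (a :: A)) with (S (length A)); rewrite S_INR; simpl.
  rewrite IH; ring.
Qed.

(* Only births can occur at or below the smallest birth, since deaths are births plus l > 0. *)
Lemma crit_uniform_at_min (l : R) (A : list R) (m : R) :
  0 < l -> (forall a, In a A -> m <= a) ->
  crit (uniform l A) m = Z.of_nat (count_occ Req_EM_T A m).
Proof.
  intro hl; induction A as [| a A IH]; simpl; intro Hmin; [reflexivity |].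
  rewrite IH by auto.
  assert (a + l <> m) by (specialize (Hmin a (or_introl eq_refl)); lra).
  unfold indicator; destruct (Req_EM_T (a + l) m); [contradiction |].
  destruct (Req_EM_T a m); lia.
Qed.

Lemma exists_list_min (L : list R) :
  L <> nil -> exists m, In m L /\ forall x, In x L -> m <= x.
Proof.
  induction L as [| a L IH]; intro HL; [congruence |].
  destruct L as [| b L].
  - exists a; split; [left; reflexivity |]. intros x [-> | []]; lra.
  - destruct IH as [m [Hm Hmin]]; [discriminate |].
    destruct (Rle_dec a m).
    + exists a; split; [left; reflexivity |].
      intros x [-> | Hx]; [lra | specialize (Hmin x Hx); lra].
    + exists m; split; [right; assumption |].
      intros x [-> | Hx]; [lra | auto].
Qed.

Lemma uniform_crit_inj (l : R) (A B : list R) :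
  0 < l ->
  (forall z, crit (uniform l A) z = crit (uniform l B) z) -> Permutation A B.
Proof.
  intro hl; remember (length A) as n eqn:Hn.
  revert A B Hn; induction n as [n IH] using lt_wf_ind; intros A B Hn Hcrit.
  destruct (list_eq_dec Req_EM_T (A ++ B) nil) as [HAB | HAB].
  { apply app_eq_nil in HAB as [-> ->]; constructor. }
  destruct (exists_list_min _ HAB) as [m [Hm Hmin]].
  assert (HcountAB : count_occ Req_EM_T A m = count_occ Req_EM_T B m).
  { pose proof (Hcrit m) as Hc.
    rewrite !crit_uniform_at_min in Hc by (auto || (intros; apply Hmin, in_or_app; auto)).
    lia. }
  assert (HmA : In m A /\ In m B).
  { rewrite !(count_occ_In Req_EM_T), <- HcountAB.
    apply in_app_or in Hm as [Hm | Hm]; apply (count_occ_In Req_EM_T) in Hm; lia. }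
  destruct HmA as [HmA HmB].
  destruct (in_split _ _ HmA) as [A1 [A2 ->]].
  destruct (in_split _ _ HmB) as [B1 [B2 ->]].
  assert (PA := Permutation_middle A1 A2 m).
  assert (PB := Permutation_middle B1 B2 m).
  rewrite <- PA, <- PB; constructor.
  apply (IH (length (A1 ++ A2))); [subst n; rewrite !length_app; simpl; lia | reflexivity |].
  apply (crit_cons_cancel (m, l)); intro z.
  rewrite (crit_perm _ (uniform l (A1 ++ m :: A2)) (Permutation_map _ PA)).
  rewrite (crit_perm _ (uniform l (B1 ++ m :: B2)) (Permutation_map _ PB)).
  apply Hcrit.
Qed.

Lemma family_crit_drift_eq (l lt t1 t2 : R) (A1 A2 : list R) :
  let f1 := (t1, lt) :: uniform l A1 in
  let f2 := (t2, lt) :: uniform l A2 in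
  0 < l -> drift f1 = drift f2 -> (forall z, crit f1 z = crit f2 z) ->
  t1 = t2 \/ lt = l.
Proof.
  intros f1 f2 hl Hdrift Hcrit.
  pose proof (moment_eq_of_crit_eq (fun x => x) _ _ Hcrit) as Hid.
  pose proof (moment_eq_of_crit_eq (fun x => x * x) _ _ Hcrit) as Hsq.
  subst f1 f2; simpl in Hdrift, Hid, Hsq.
  rewrite !moment_id_uniform in Hid. rewrite !moment_sq_uniform in Hsq.
  assert (Hn : INR (length A1) = INR (length A2))
    by (apply (Rmult_eq_reg_r l); lra).
  rewrite Hn in Hsq.
  assert (Hfactor : (t1 - t2) * (lt - l) = 0) by nra.
  apply Rmult_integral in Hfactor as [H | H]; [left | right]; lra.
Qed.

Theorem proposition12 (l lt delta : R) (hl : 0 < l) (hlt : 0 < lt)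
  (f1 f2 : barcode) :
  in_family l lt delta f1 -> in_family l lt delta f2 ->
  (forall g : R, crit f1 g = crit f2 g) ->
  barcode_eq f1 f2.
Proof.
  intros [t1 [A1 [P1 D1]]] [t2 [A2 [P2 D2]]] Hcrit.
  unfold barcode_eq in *.
  rewrite P1, P2 in *.
  fold (uniform l A1) (uniform l A2) in *.
  assert (Hcrit' : forall z, crit ((t1, lt) :: uniform l A1) z
                             = crit ((t2, lt) :: uniform l A2) z).
  { intro z. rewrite <- (crit_perm _ _ P1), <- (crit_perm _ _ P2). apply Hcrit. }
  rewrite (drift_perm _ _ P1) in D1; rewrite (drift_perm _ _ P2) in D2.
  destruct (family_crit_drift_eq l lt t1 t2 A1 A2 hl ltac:(congruence) Hcrit')
    as [<- | ->].
  - apply perm_skip, Permutation_map, (uniform_crit_inj l); [exact hl |].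
    exact (crit_cons_cancel _ _ _ Hcrit').
  - apply (Permutation_map (fun a => (a, l)) (uniform_crit_inj l (t1 :: A1) (t2 :: A2) hl Hcrit')).
Qed.
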